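(* For every integer $r\ge2$, $$\zeta(r)=\frac{1}{(1-2^{1-r})\,r!}\sum_{n=1}^\infty\frac{1}{2^{n+1}}\,Y_r\!\left(0!\,H_n^{(1)},1!\,H_n^{(2)},\dots,(r-1)!\,H_n^{(r)}\right),$$ the series being convergent.
   Context: $\zeta$ is the Riemann zeta function. $H_n^{(m)}=\sum_{k=1}^nk^{-m}$. Complete (exponential) Bell polynomials: $Y_0=1$ and for $r\ge1$, $Y_r(x_1,\dots,x_r)=\sum \frac{r!}{k_1!\cdots k_r!}\prod_{j=1}^r\left(\frac{x_j}{j!}\right)^{k_j}$, the sum over all tuples of nonnegative integers $(k_1,\dots,k_r)$ with $k_1+2k_2+\cdots+rk_r=r$. *)

From Stdlib Require Import Reals Lra Lia ZArith List.
Import ListNotations.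
Open Scope R_scope.

Fixpoint all_lists (len bound : nat) : list (list nat) :=
  match len with
  | O => [nil]
  | S l => flat_map (fun a => map (cons a) (all_lists l bound)) (seq 0 (S bound))
  end.

Fixpoint wsum (j : nat) (k : list nat) : nat :=
  match k with
  | nil => O
  | a :: k' => (j * a + wsum (S j) k')%nat
  end.

Fixpoint bell_prod (x : nat -> R) (j : nat) (k : list nat) : R :=
  match k with
  | nil => 1
  | a :: k' => (/ INR (fact a)) * (x j / INR (fact j)) ^ a * bell_prod x (S j) k'
  end.

(* Complete exponential Bell polynomial Y_r(x_1,...,x_r):
   sum over tuples (k_1..k_r) of naturals with k_1+2k_2+...+r k_r = r
   of r!/(k_1!...k_r!) prod_j (x_j/j!)^{k_j}.  Entries are bounded by r
   (automatic, since j*k_j <= r). Y_0 = 1 (empty tuple). *)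
Definition bellY (r : nat) (x : nat -> R) : R :=
  fold_right Rplus 0
    (map (fun k => INR (fact r) * bell_prod x 1 k)
       (filter (fun k => Nat.eqb (wsum 1 k) r) (all_lists r r))).

Definition harm (n m : nat) : R :=
  fold_right Rplus 0 (map (fun k => / (INR k) ^ m) (seq 1 n)).

From Stdlib Require Import Reals ZArith List.
From mathcomp Require Import all_boot all_order all_algebra.
From mathcomp Require Import Rstruct.
From mathcomp Require Import ring lra.

Set Implicit Arguments.
Unset Strict Implicit.
Unset Printing Implicit Defensive.

Import Order.TTheory GRing.Theory Num.Theory.
Local Open Scope ring_scope.

Lemma natr_fact_neq0 (F : numDomainType) k : k`!%:R != 0 :> F.
Proof. by rewrite pnatr_eq0 -lt0n fact_gt0. Qed.

Lemma dvdp_XnP (F : fieldType) n (p : {poly F}) :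
  reflect (forall m, (m < n)%N -> p`_m = 0) ('X^n %| p).
Proof.
apply: (iffP idP) => [/dvdpP [q ->] m lt_mn | p0]; first by rewrite coefMXn lt_mn.
apply/modp_eq0P; rewrite -Pdiv.IdomainMonic.take_poly_modp; apply/polyP => m.
by rewrite coef_take_poly coef0; case: ltnP => // /p0.
Qed.

Section Theta.
Variable F : numFieldType.
Implicit Types p q g h : {poly F}.

Definition theta p := 'X * p^`().

Lemma thetaM p q : theta (p * q) = theta p * q + p * theta q.
Proof. by rewrite /theta derivM mulrDr mulrA mulrCA. Qed.

Lemma coef_theta p m : (theta p)`_m = p`_m *+ m.
Proof. by rewrite /theta coefXM; case: m => [|m] //=; rewrite coef_deriv. Qed.

Lemma thetaZXn (c : F) n : theta (c *: 'X^n) = (c *+ n) *: 'X^n.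
Proof.
rewrite /theta derivZ derivXn; case: n => [|n].
  by rewrite mulr0n scaler0 mulr0 mulr0n scale0r.
by rewrite -scalerAr mulrnAr -exprS -scalerMnr scalerMnl.
Qed.

Lemma theta_sum (I : Type) (s : seq I) (P : pred I) (f : I -> {poly F}) :
  theta (\sum_(i <- s | P i) f i) = \sum_(i <- s | P i) theta (f i).
Proof. by rewrite /theta raddf_sum mulr_sumr. Qed.

(* [theta_eqmod n p g]: theta p = g * p modulo X^n, i.e. g is the logarithmic
   theta-derivative of p up to order n. *)
Definition theta_eqmod n p g := 'X^n %| theta p - g * p.

Lemma theta_eqmodM n p q g h :
  theta_eqmod n p g -> theta_eqmod n q h -> theta_eqmod n (p * q) (g + h).
Proof.
move=> dp dq; rewrite /theta_eqmod.
have -> : theta (p * q) - (g + h) * (p * q) =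
    (theta p - g * p) * q + p * (theta q - h * q) by rewrite thetaM; ring.
by apply: dvdp_add; [apply: dvdp_mulr | apply: dvdp_mull].
Qed.

Lemma theta_eqmod_prod n (I : Type) (s : seq I) (P : pred I) (f g : I -> {poly F}) :
  (forall i, P i -> theta_eqmod n (f i) (g i)) ->
  theta_eqmod n (\prod_(i <- s | P i) f i) (\sum_(i <- s | P i) g i).
Proof.
move=> fg; apply: (big_rec2 (theta_eqmod n)) => [|i p1 g1 Pi pg].
  by rewrite /theta_eqmod /theta derivC mulr0 mul0r subr0 dvdp0.
exact: theta_eqmodM (fg i Pi) pg.
Qed.

Lemma theta_eqmod_coef n p g m : theta_eqmod n p g -> (m < n)%N ->
  p`_m *+ m = \sum_(i < m.+1) g`_i * p`_(m - i).
Proof.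
move=> /dvdp_XnP pg lt_mn; apply/eqP; rewrite -subr_eq0 -coef_theta -coefM -coefB.
by rewrite pg.
Qed.

Lemma theta_eqmod_uniq n p q g : theta_eqmod n p g -> theta_eqmod n q g ->
  g`_0 = 0 -> p`_0 = q`_0 -> forall m, (m < n)%N -> p`_m = q`_m.
Proof.
move=> pg qg g0 pq0; elim/ltn_ind => -[//|m] IH lt_mn.
apply: (pmulrnI (ltn0Sn m)); rewrite (theta_eqmod_coef pg lt_mn) (theta_eqmod_coef qg lt_mn).
rewrite big_ord_recl [RHS]big_ord_recl g0 !mul0r !add0r; apply: eq_bigr => i _.
rewrite /= subSS IH // ?ltnS ?leq_subr //.
exact: leq_ltn_trans (leq_subr _ _) (ltnW lt_mn).
Qed.

End Theta.

Section HarmonicProduct.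
Variable F : numFieldType.

Definition geom_poly (y : F) B : {poly F} := \poly_(a < B.+1) y ^+ a.

Lemma coef_geom_poly y B m :
  (geom_poly y B)`_m = if (m <= B)%N then y ^+ m else 0.
Proof. by rewrite coef_poly. Qed.

Lemma geom_poly_sub1 y B : geom_poly y B - 1 = \sum_(i < B) y ^+ i.+1 *: 'X^(i.+1).
Proof. by rewrite /geom_poly poly_def big_ord_recl expr0 scale1r addrC addKr. Qed.

Lemma theta_geom_poly y B : theta_eqmod B.+1 (geom_poly y B) (geom_poly y B - 1).
Proof.
apply/dvdp_XnP => m; rewrite ltnS => le_mB.
rewrite coefB coef_theta coefM coef_geom_poly le_mB.
rewrite big_ord_recl /= subn0 coefB coef1 !coef_geom_poly le_mB subrr mul0r add0r.
rewrite (eq_bigr (fun=> y ^+ m)) ?sumr_const ?card_ord ?subrr // => i _.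
rewrite /bump add1n coefB coef1 !coef_geom_poly subr0 (leq_trans (ltn_ord i) le_mB).
by rewrite (leq_trans (leq_subr _ _) le_mB) -exprD subnKC.
Qed.

Lemma coef_mul_geom_poly p y B m : (m < B)%N ->
  (p * geom_poly y B)`_m.+1 = p`_m.+1 + y * (p * geom_poly y B)`_m.
Proof.
move=> lt_mB; rewrite coefMr [in RHS]coefMr big_ord_recl subn0 coef_geom_poly /=.
rewrite mulr1 mulr_sumr; congr (_ + _); apply: eq_bigr => i _.
have lt_iB : (i < B)%N := leq_trans (ltn_ord i) lt_mB.
by rewrite /bump add1n subSS !coef_geom_poly lt_iB ltnW // exprS mulrCA.
Qed.

Definition binom_transform (a : nat -> F) n := \sum_(k < n) 'C(n, k.+1)%:R * a k.

Definition eta_term r k : F := (-1) ^+ k / k.+1%:R ^+ r.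

Lemma binom_transform_eta0 n : binom_transform (eta_term 0) n.+1 = 1.
Proof.
have := exprDn (1 : F) (-1) n.+1; rewrite subrr expr0n /= big_ord_recl /=.
rewrite !expr1n !mul1r expr0 bin0 mulr1n => /esym/eqP; rewrite addr_eq0 => /eqP ->.
rewrite -sumrN; apply: eq_bigr => i _.
rewrite /eta_term expr0 divr1 /bump add1n exprS expr1n mul1r mulN1r mulNrn opprK.
by rewrite mulr_natl.
Qed.

Lemma binom_transform_etaSS m n :
  binom_transform (eta_term m.+1) n.+1 =
  binom_transform (eta_term m.+1) n + binom_transform (eta_term m) n.+1 / n.+1%:R.
Proof.
have -> : binom_transform (eta_term m.+1) n =
    \sum_(k < n.+1) 'C(n, k.+1)%:R * eta_term m.+1 k.
  by rewrite big_ord_recr /= bin_small // mul0r addr0.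
rewrite /binom_transform mulr_suml -big_split /=; apply: eq_bigr => k _.
move: (binS n k) (mul_bin_diag n.+1 k) => /=.
move: 'C(n.+1, k.+1) 'C(n, k.+1) 'C(n, k) => c1 c0 c e1 /(congr1 (GRing.natmul (1 : F))).
rewrite !natrM => hc.
have -> : c0%:R = c1%:R - c%:R :> F by rewrite e1 natrD addrK.
have -> : c%:R = k.+1%:R * c1%:R / n.+1%:R :> F by rewrite -hc mulrC mulKf // pnatr_eq0.
rewrite /eta_term exprS; field.
by rewrite !nat1r expf_eq0 !pnatr_eq0 andbF.
Qed.

(* The coefficients of prod_(k < n) 1 / (1 - t / (k + 1)) are the complete
   homogeneous symmetric functions h_m(1, 1/2, ..., 1/n); they satisfy
   h_m(n + 1) = h_m(n) + h_(m-1)(n + 1) / (n + 1), as does the binomial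
   transform of the eta terms. *)
Lemma coef_prod_geom_poly_recip B m n : (m <= B)%N -> (0 < m + n)%N ->
  (\prod_(0 <= k < n) geom_poly k.+1%:R^-1 B)`_m = binom_transform (eta_term m) n.
Proof.
elim: m n => [|m IHm] n le_mB; rewrite ?add0n => mn_gt0.
  rewrite coef0_prod big1 => [|k _]; last by rewrite coef_geom_poly.
  by case: n mn_gt0 => // n _; rewrite binom_transform_eta0.
elim: n {mn_gt0} => [|n IHn].
  by rewrite big_geq // coef1 /binom_transform big_ord0.
rewrite big_nat_recr // coef_mul_geom_poly // -big_nat_recr // IHn.
by rewrite IHm ?(ltnW le_mB) ?addnS // binom_transform_etaSS mulrC.
Qed.

End HarmonicProduct.

Arguments eta_term {F} r k.

Section BellFactors.
Variable F : numFieldType.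
Implicit Types x : nat -> F.

Definition bell_coef x j a : F := (x j / j`!%:R) ^+ a / a`!%:R.

(* A truncation of exp (x_j t^j / j!): the complete Bell polynomial Y_r(x) is
   r! times the coefficient of t^r in the product of these factors. *)
Definition bell_factor x B j : {poly F} :=
  \sum_(0 <= a < B.+1) bell_coef x j a *: 'X^(j * a).

Lemma bell_coefS x j a : bell_coef x j a.+1 *+ (j * a.+1) = x j / j`!%:R *+ j * bell_coef x j a.
Proof.
rewrite /bell_coef -[LHS]mulr_natr -[_ *+ j]mulr_natr natrM factS natrM exprS.
by field; rewrite !natr_fact_neq0 nat1r pnatr_eq0.
Qed.

Lemma theta_bell_factor x B j : (0 < j)%N ->
  theta_eqmod B.+1 (bell_factor x B j) ((x j / j`!%:R *+ j) *: 'X^j).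
Proof.
move=> j_gt0; set v := x j / j`!%:R *+ j.
have thetaE : theta (bell_factor x B j) =
    \sum_(0 <= a < B) (v * bell_coef x j a) *: 'X^(j * a.+1).
  rewrite theta_sum big_nat_recl // muln0 thetaZXn mulr0n scale0r add0r.
  by apply: eq_bigr => a _; rewrite thetaZXn bell_coefS.
have gE : (v *: 'X^j) * bell_factor x B j = \sum_(0 <= a < B) (v * bell_coef x j a) *: 'X^(j * a.+1)
    + (v * bell_coef x j B) *: 'X^(j * B.+1).
  rewrite mulr_sumr big_nat_recr //=; congr (_ + _); first apply: eq_bigr => a _;
  by rewrite -scalerAl -scalerAr scalerA -exprD mulnS.
rewrite /theta_eqmod thetaE gE opprD addrA subrr add0r -scaleNr -mul_polyC.
by rewrite dvdp_mull // dvdp_exp2l // leq_pmull.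
Qed.

Lemma coef0_bell_factor x B j : (0 < j)%N -> (bell_factor x B j)`_0 = 1.
Proof.
move=> j_gt0; rewrite /bell_factor coef_sum big_nat_recl // big1 => [|a _].
  by rewrite coefZ muln0 coefXn /bell_coef expr0 fact0 divr1 mulr1 addr0.
by rewrite coefZ coefXn eq_sym muln_eq0 eqn0Ngt j_gt0 mulr0.
Qed.

Lemma theta_bell_prod x r : theta_eqmod r.+1 (\prod_(1 <= i < r.+1) bell_factor x r i)
  (\sum_(1 <= i < r.+1) (x i / i`!%:R *+ i) *: 'X^i).
Proof.
rewrite big_seq [X in theta_eqmod _ _ X]big_seq; apply: theta_eqmod_prod => i.
by rewrite mem_index_iota => /andP [i_gt0 _]; exact: theta_bell_factor.
Qed.

End BellFactors.

Lemma foldr_map_filter_sum (T : Type) (f : T -> R) (P : pred T) (l : list T) :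
  fold_right Rplus 0 (List.map f (List.filter P l)) = \sum_(t <- l | P t) f t.
Proof.
elim: l => [|t l IH]; first by rewrite big_nil.
by rewrite big_cons /=; case: (P t); rewrite /= IH.
Qed.

Lemma all_listsS L B :
  all_lists L.+1 B = [seq a :: k | a <- iota 0 B.+1, k <- all_lists L B].
Proof.
suff gen m n : flat_map (fun a => List.map (cons a) (all_lists L B)) (List.seq m n)
    = [seq a :: k | a <- iota m n, k <- all_lists L B] by exact: gen.
elim: n m => //= n IH m; rewrite IH.
by elim: (all_lists L B) => //= k l ->.
Qed.

Lemma bell_prod_cons x j a k : bell_prod x j (a :: k) = bell_coef x j a * bell_prod x j.+1 k.
Proof. by rewrite /= !RealsE [_^-1 * _]mulrC. Qed.

Lemma bell_sum_coef x B L j m :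
  \sum_(k <- all_lists L B | wsum j k == m) bell_prod x j k
  = (\prod_(j <= i < j + L) bell_factor x B i)`_m.
Proof.
elim: L j m => [|L IH] j m.
  by rewrite addn0 big_geq // coef1 big_cons big_nil addr0; case: m.
rewrite all_listsS big_mkcond big_allpairs_dep big_ltn ?addnS ?ltnS ?leq_addr // -addSn.
have -> : iota 0 B.+1 = index_iota 0 B.+1 by rewrite /index_iota subn0.
rewrite {1}/bell_factor mulr_suml coef_sum; apply: eq_bigr => a _.
rewrite -scalerAl coefZ coefXnM -IH.
case: ltnP => [ltm|lem].
  rewrite mulr0 big1 // => k _; rewrite /= plusE multE.
  by case: eqP => // hm; move: ltm; rewrite -hm ltnNge leq_addr.
rewrite mulr_sumr [RHS]big_mkcond; apply: eq_bigr => k _.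
by rewrite bell_prod_cons /= plusE multE -[in RHS](eqn_add2l (j * a)) subnKC.
Qed.

Lemma bellY_coef r x : bellY r x = r`!%:R * (\prod_(1 <= i < r.+1) bell_factor x r i)`_r.
Proof. by rewrite /bellY foldr_map_filter_sum -mulr_sumr INRE factE bell_sum_coef. Qed.

Lemma harmE n m : harm n m = \sum_(k < n) (k.+1%:R ^+ m)^-1.
Proof.
suff gen s : fold_right Rplus 0 (List.map (fun k => / INR k ^ m) (List.seq s n)) =
    \sum_(k < n) ((s + k)%:R ^+ m)^-1 by rewrite /harm gen.
elim: n s => [|n IH] s /=; first by rewrite big_ord0.
by rewrite big_ord_recl IH addn0 RinvE RpowE INRE; under eq_bigr do rewrite addSnnS.
Qed.

Lemma bell_harm_generator r n :
  \sum_(1 <= i < r.+1) (INR (fact (i - 1)) * harm n i / i`!%:R *+ i) *: 'X^i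
  = \sum_(0 <= k < n) (geom_poly k.+1%:R^-1 r - 1).
Proof.
under [RHS]eq_bigr do rewrite geom_poly_sub1.
rewrite exchange_big big_add1 big_mkord /=; apply: eq_bigr => i _.
rewrite -scaler_suml big_mkord harmE INRE factE subn1 /=; congr (_ *: _).
under [RHS]eq_bigr do rewrite exprVn.
rewrite -mulr_natr factS natrM; field.
by rewrite natr_fact_neq0 nat1r pnatr_eq0.
Qed.

(* Both generating polynomials have the logarithmic theta-derivative
   sum_i H_n^(i) t^i modulo t^(r+1), since exp (sum_i H_n^(i) t^i / i) is
   prod_(k <= n) 1 / (1 - t / k). *)
Lemma bellY_harm r n : (0 < n)%N ->
  bellY r (fun j => INR (fact (j - 1)) * harm n j) = r`!%:R * binom_transform (eta_term r) n.
Proof.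
move=> n_gt0; rewrite bellY_coef -(@coef_prod_geom_poly_recip R r) ?addn_gt0 ?n_gt0 ?orbT //.
congr (_ * _); apply: (theta_eqmod_uniq (theta_bell_prod _ r)) => //.
- by rewrite bell_harm_generator; apply: theta_eqmod_prod => k _; exact: theta_geom_poly.
- rewrite bell_harm_generator coef_sum big1 // => k _.
  by rewrite coefB coef1 coef_geom_poly expr0 subrr.
rewrite !coef0_prod [in RHS]big1 => [|k _]; last by rewrite coef_geom_poly.
rewrite big_nat_cond big1 // => i /andP [/andP [i_gt0 _] _].
exact: coef0_bell_factor.
Qed.

Section EulerTransform.
Variable F : realFieldType.
Implicit Types a c : nat -> F.

Definition binom_partial M k : F := \sum_(j < k) 'C(M, j)%:R.

Lemma binom_partialS M k :
  binom_partial M.+1 k.+1 = 2 * binom_partial M k.+1 - 'C(M, k)%:R.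
Proof.
rewrite /binom_partial; elim: k => [|k IH]; first by rewrite !big_ord1 !bin0; ring.
by rewrite big_ord_recr /= IH binS natrD [in RHS]big_ord_recr /=; ring.
Qed.

Lemma binom_partial_full M : binom_partial M M.+1 = 2 ^+ M.
Proof.
rewrite -[2]/(1 + 1 : F) exprDn; apply: eq_bigr => i _.
by rewrite !expr1n mul1r.
Qed.

Lemma sum_binom_shift2_le N : \sum_(j < N) 'C(N.+2, j.+2)%:R <= 2 ^+ N.+2 :> F.
Proof.
rewrite -binom_partial_full /binom_partial 2!big_ord_recl big_ord_recr /=.
do 2!(apply: ler_wpDl; first exact: ler0n).
by apply: ler_wpDr; first exact: ler0n.
Qed.

Lemma binom_div_le M j :
  'C(M, j.+1)%:R / j.+1%:R <= 2 / M.+1%:R * 'C(M.+1, j.+2)%:R :> F.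
Proof.
move: (mul_bin_diag M.+1 j.+1); move: 'C(M, j.+1) 'C(M.+1, j.+2) => c c' /=.
move=> /(congr1 (GRing.natmul (1 : F))); rewrite !natrM => e.
have -> : c%:R = j.+2%:R * c'%:R / M.+1%:R :> F by rewrite -e mulrC mulKf // pnatr_eq0.
have -> : j.+2%:R * c'%:R / M.+1%:R / j.+1%:R = j.+2%:R / j.+1%:R * (c'%:R / M.+1%:R) :> F.
  by field; rewrite !nat1r !pnatr_eq0.
have -> : 2 / M.+1%:R * c'%:R = 2 * (c'%:R / M.+1%:R) :> F by rewrite mulrAC -mulrA.
apply: ler_wpM2r; first by rewrite divr_ge0.
rewrite ler_pdivrMr ?ltr0n // -natrM ler_nat.
by rewrite mul2n -addnn addSn ltnS leq_addl.
Qed.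

Definition euler_partial a N := \sum_(n < N) binom_transform a n.+1 / 2 ^+ n.+2.

Definition euler_error a N := (\sum_(k < N) a k * binom_partial N.+1 k.+2) / 2 ^+ N.+1.

Lemma euler_partialE a N : euler_partial a N = \sum_(k < N) a k - euler_error a N.
Proof.
elim: N => [|N IH]; first by rewrite /euler_partial /euler_error !big_ord0 mul0r subrr.
have errorS : euler_error a N.+1 =
    euler_error a N + a N - binom_transform a N.+1 / 2 ^+ N.+2.
  rewrite /euler_error (eq_bigr (fun k : 'I_N.+1 =>
      2 * (a k * binom_partial N.+1 k.+2) - 'C(N.+1, k.+1)%:R * a k)); last first.
    by move=> k _; rewrite binom_partialS; ring.
  rewrite sumrB -mulr_sumr big_ord_recr /= binom_partial_full /binom_transform !exprS.
  by field; rewrite expf_neq0 // pnatr_eq0.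
rewrite /euler_partial big_ord_recr /= -/(euler_partial a N) IH errorS (big_ord_recr N) /=.
ring.
Qed.

Lemma sum_mul_partial_sums a c N :
  \sum_(k < N) a k * \sum_(j < k.+2) c j =
  c 0%N * \sum_(0 <= i < N) a i + \sum_(j < N) c j.+1 * \sum_(j <= i < N) a i.
Proof.
elim: N => [|N IH]; first by rewrite !big_ord0 big_geq // mulr0 addr0.
have tailS : \sum_(j < N) c j.+1 * \sum_(j <= i < N.+1) a i =
    \sum_(j < N) c j.+1 * \sum_(j <= i < N) a i + (\sum_(j < N) c j.+1) * a N.
  by rewrite mulr_suml -big_split; apply: eq_bigr => j _; rewrite big_nat_recr ?mulrDr // ltnW.
rewrite big_ord_recr /= IH big_nat_recr // [in RHS]big_ord_recr /= big_nat1 tailS.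
rewrite big_ord_recl big_ord_recr /=; ring.
Qed.

Lemma euler_error_bound a N :
  (forall p, `|\sum_(p <= i < N) a i| <= p.+1%:R^-1) -> `|euler_error a N| <= 5 / N.+2%:R.
Proof.
move=> tail.
have num_le : `|\sum_(k < N) a k * binom_partial N.+1 k.+2| <= 1 + 2 / N.+2%:R * 2 ^+ N.+2.
  rewrite /binom_partial (sum_mul_partial_sums a (fun j => 'C(N.+1, j)%:R)) bin0 mul1r.
  apply: le_trans (ler_normD _ _) _; apply: lerD; first by have := tail 0%N; rewrite invr1.
  apply: le_trans (ler_norm_sum _ _ _) _.
  apply: (@le_trans _ _ (\sum_(j < N) 2 / N.+2%:R * 'C(N.+2, j.+2)%:R)).
    apply: ler_sum => j _; rewrite normrM ger0_norm ?ler0n //.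
    exact: le_trans (ler_wpM2l (ler0n _ _) (tail j)) (binom_div_le N.+1 j).
  by rewrite -mulr_sumr; apply: ler_wpM2l; [rewrite divr_ge0 | exact: sum_binom_shift2_le].
have inv_pow_le : (2 ^+ N.+1)^-1 <= N.+2%:R^-1 :> F.
  by rewrite lef_pV2 ?posrE ?exprn_gt0 ?ltr0n // -natrX ler_nat ltn_expl.
rewrite /euler_error normrM normfV [`|2 ^+ _|]ger0_norm ?exprn_ge0 //.
apply: (@le_trans _ _ ((1 + 2 / N.+2%:R * 2 ^+ N.+2) * (2 ^+ N.+1)^-1)).
  by apply: ler_wpM2r; [rewrite invr_ge0 exprn_ge0 | exact: num_le].
have -> : (1 + 2 / N.+2%:R * 2 ^+ N.+2) * (2 ^+ N.+1)^-1 = (2 ^+ N.+1)^-1 + 4 / N.+2%:R :> F.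
  by rewrite !exprS; field; rewrite -natrD pnatr_eq0 /= expf_neq0 // pnatr_eq0.
have -> : 5 / N.+2%:R = N.+2%:R^-1 + 4 / N.+2%:R :> F by field; rewrite -natrD pnatr_eq0.
by rewrite lerD2r.
Qed.

Lemma alternating_sum_bounds (d : nat -> F) L :
  (forall i, 0 <= d i) -> (forall i, d i.+1 <= d i) ->
  0 <= \sum_(i < L) (-1) ^+ i * d i <= d 0%N.
Proof.
elim: L d => [|L IH] d d_ge0 d_decr; first by rewrite big_ord0 lexx d_ge0.
rewrite big_ord_recl expr0 mul1r.
under eq_bigr => i _ do rewrite /= exprS mulN1r mulNr.
have /andP [lo hi] := IH (fun i => d i.+1) (fun i => d_ge0 i.+1) (fun i => d_decr i.+1).
by rewrite sumrN subr_ge0 (le_trans hi (d_decr 0%N)) /= lerBlDr lerDl lo.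
Qed.

Lemma eta_term_tail r p N : (0 < r)%N ->
  `|\sum_(p <= i < N) eta_term r i| <= p.+1%:R^-1 :> F.
Proof.
move=> r_gt0; case: (leqP N p) => [le_Np | lt_pN].
  by rewrite big_geq // normr0 invr_ge0 ler0n.
pose d i : F := ((i + p).+1%:R ^+ r)^-1.
have d_ge0 i : 0 <= d i by rewrite invr_ge0 exprn_ge0 ?ler0n.
have d_decr i : d i.+1 <= d i.
  by rewrite lef_pV2 ?posrE ?exprn_gt0 ?ltr0n // -!natrX ler_nat leq_exp2r.
rewrite -{1}(add0n p) big_addn (eq_bigr (fun i => (-1) ^+ p * ((-1) ^+ i * d i))); last first.
  by move=> i _; rewrite /eta_term exprD [(-1) ^+ i * _]mulrC -mulrA.
rewrite -mulr_sumr normrM normrX normrN1 expr1n mul1r big_mkord.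
have /andP [lo hi] := alternating_sum_bounds (N - p) d_ge0 d_decr.
rewrite ger0_norm // (le_trans hi) // /d add0n lef_pV2 ?posrE ?exprn_gt0 ?ltr0n //.
by rewrite -natrX ler_nat -(prednK r_gt0) expnS leq_pmulr // expn_gt0.
Qed.

Lemma sum_alternating_sign (K : comPzRingType) (f : nat -> K) N :
  \sum_(k < N) (-1) ^+ k * f k = \sum_(k < N) f k - 2 * \sum_(k < N./2) f k.*2.+1.
Proof.
elim: N => [|N IH]; first by rewrite !big_ord0 mulr0 subr0.
rewrite !big_ord_recr /= IH uphalf_half -signr_odd.
case: (boolP (odd N)) => oddN; last by rewrite add0n expr0 mul1r addrAC.
have eN : (N./2).*2.+1 = N by rewrite -[RHS](odd_double_half N) oddN.
by rewrite add1n big_ord_recr /= eN; ring.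
Qed.

Definition zeta_partial r N : F := \sum_(k < N) (k.+1%:R ^+ r)^-1.

Definition eta_partial r N : F := \sum_(k < N) eta_term r k.

Definition eta_factor r : F := 1 - 2 / 2 ^+ r.

Lemma zeta_partial_le r N : (2 <= r)%N -> zeta_partial r N.+1 <= 2 - N.+1%:R^-1.
Proof.
move=> r_ge2; elim: N => [|N IH].
  by rewrite /zeta_partial big_ord1 expr1n invr1; lra.
rewrite /zeta_partial big_ord_recr /= -/(zeta_partial r N.+1).
suff h : (N.+2%:R ^+ r)^-1 <= N.+1%:R^-1 - N.+2%:R^-1 :> F.
  by apply: le_trans (lerD IH h) _; rewrite addrA subrK.
have -> : N.+1%:R^-1 - N.+2%:R^-1 = ((N.+1 * N.+2)%:R)^-1 :> F.
  by rewrite natrM -[N.+2]addn1 natrD; field; rewrite nat1r natr1 !pnatr_eq0.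
rewrite lef_pV2 ?posrE ?exprn_gt0 ?ltr0n // -natrX ler_nat.
apply: (@leq_trans (N.+2 ^ 2)); first by rewrite expnS expn1 leq_mul.
by rewrite leq_pexp2l.
Qed.

Lemma eta_partialE r N :
  eta_partial r N = zeta_partial r N - 2 / 2 ^+ r * zeta_partial r N./2.
Proof.
rewrite /eta_partial /eta_term (sum_alternating_sign (fun k => (k.+1%:R ^+ r)^-1)) -mulrA.
congr (_ - 2 * _); rewrite mulr_sumr; apply: eq_bigr => k _.
by rewrite -doubleS -mul2n natrM exprMn invfM.
Qed.

Lemma eta_factor_neq0 r : (2 <= r)%N -> eta_factor r != 0.
Proof.
move=> r_ge2; rewrite subr_eq0 eq_sym lt_eqF // ltr_pdivrMr ?exprn_gt0 // mul1r.
by rewrite -natrX ltr_nat -[X in (X < _)%N](expn1 2) ltn_exp2l.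
Qed.

End EulerTransform.

Arguments zeta_partial {F} r N.
Arguments eta_partial {F} r N.
Arguments eta_factor {F} r.

Lemma Un_cvP (u : nat -> R) l :
  Un_cv u l <-> forall e : R, 0 < e -> exists N, forall n, (N <= n)%N -> `|u n - l| < e.
Proof.
split=> cv e /RltP e_gt0; have [N cvN] := cv e e_gt0; exists N => n /ssrnat.leP le_Nn.
  by apply/RltP; rewrite -RdistE; exact: cvN.
by rewrite RdistE; apply/RltP; exact: cvN.
Qed.

Lemma Un_cv_const (c : R) : Un_cv (fun=> c) c.
Proof. by apply/Un_cvP => e e_gt0; exists 0%N => n _; rewrite subrr normr0. Qed.

Lemma Un_cv_succ u l : Un_cv u l -> Un_cv (fun n => u n.+1) l.
Proof. by move=> /Un_cvP cv; apply/Un_cvP => e /cv [N cvN]; exists N => n /leqW /cvN. Qed.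

Lemma Un_cv_half u l : Un_cv u l -> Un_cv (fun n => u n./2) l.
Proof.
move=> /Un_cvP cv; apply/Un_cvP => e /cv [N cvN]; exists N.*2 => n le_Nn.
by apply: cvN; rewrite -(doubleK N) half_leq.
Qed.

Lemma infinite_sum_partial (f : nat -> R) l :
  Un_cv (fun N => \sum_(k < N) f k) l -> infinite_sum f l.
Proof. by move=> /Un_cv_succ cv; apply: Un_cv_ext cv => n; rewrite sum_f_R0E big_mkord. Qed.

Lemma zeta_partial_cvg r : (2 <= r)%N -> {z | Un_cv (zeta_partial r) z}.
Proof.
move=> r_ge2; apply: growing_cv.
  move=> n; apply/RleP; rewrite /zeta_partial big_ord_recr /= lerDl.
  by rewrite invr_ge0 exprn_ge0.
exists 2 => _ [[|n] ->]; apply/RleP; first by rewrite /zeta_partial big_ord0.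
apply: le_trans (zeta_partial_le R n r_ge2) _.
by rewrite lerBlDr lerDl invr_ge0 ler0n.
Qed.

Lemma eta_partial_cvg r z :
  Un_cv (zeta_partial r) z -> Un_cv (eta_partial r) (eta_factor r * z).
Proof.
move=> cvz; rewrite RmultE /eta_factor mulrBl mul1r.
apply: Un_cv_ext (CV_minus _ _ _ _ cvz (CV_mult _ _ _ _ (Un_cv_const _) (Un_cv_half cvz))).
by move=> n; rewrite eta_partialE.
Qed.

Lemma euler_error_cvg (a : nat -> R) :
  (forall p N, `|\sum_(p <= i < N) a i| <= p.+1%:R^-1) -> Un_cv (euler_error a) 0.
Proof.
move=> tail; apply/Un_cvP => e e_gt0; exists (Num.bound (e^-1 * 5)) => n le_bn.
rewrite subr0; apply: le_lt_trans (euler_error_bound (tail^~ n)) _.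
rewrite ltr_pdivrMr ?ltr0n // -ltr_pdivrMl //.
apply: lt_le_trans (archi_boundP _) _; first by rewrite mulr_ge0 // invr_ge0 ltW.
have : (Num.bound (e^-1 * 5) <= n.+2)%N by rewrite (leq_trans le_bn) // leqW.
by rewrite -(ler_nat R).
Qed.

Lemma euler_partial_cvg (a : nat -> R) L :
  Un_cv (fun N => \sum_(k < N) a k) L ->
  (forall p N, `|\sum_(p <= i < N) a i| <= p.+1%:R^-1) -> Un_cv (euler_partial a) L.
Proof.
move=> cva tail; rewrite -(subr0 L).
by apply: Un_cv_ext (CV_minus _ _ _ _ cva (euler_error_cvg tail)) => N; rewrite euler_partialE.
Qed.

Lemma bell_series_partial r N :
  \sum_(m < N) / 2 ^ (S m + 1)%coq_nat *
    bellY r (fun j => INR (fact (j - 1)%coq_nat) * harm (S m) j)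
  = INR (fact r) * euler_partial (eta_term r) N.
Proof.
rewrite /euler_partial mulr_sumr; apply: eq_bigr => m _.
rewrite bellY_harm // RinvE RpowE IZRposE !INRE /= plusE addn1 factE.
by rewrite [LHS]mulrC -mulrA.
Qed.


Close Scope ring_scope.
Open Scope R_scope.

Lemma eta_factor_powerRZ r : 1 - powerRZ 2 (Z.sub 1 (Z.of_nat r)) = eta_factor r.
Proof.
rewrite (_ : Z.sub 1 (Z.of_nat r) = Z.add 1 (Z.opp (Z.of_nat r))) // powerRZ_add.
  by rewrite powerRZ_neg' -pow_powerRZ /= !RmultE mulr1 RinvE RpowE IZRposE INRE.
by apply/eqP; rewrite IZRposE INRE /= pnatr_eq0.
Qed.

Theorem mainTheorem10 (r : nat) (hr : (2 <= r)%coq_nat) :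
  exists z s : R,
    infinite_sum (fun k => / (INR (S k)) ^ r) z /\
    infinite_sum
      (fun m => / 2 ^ (S m + 1)%coq_nat *
         bellY r (fun j => INR (fact (j - 1)%coq_nat) * harm (S m) j)) s /\
    z = / ((1 - powerRZ 2 (Z.sub 1 (Z.of_nat r))) * INR (fact r)) * s.
Proof.
move/ssrnat.leP: hr => r_ge2; have [z cvz] := zeta_partial_cvg r_ge2.
exists z, (INR (fact r) * (eta_factor r * z)); split; [|split].
- apply: infinite_sum_partial; apply: Un_cv_ext cvz => N.
  by apply: eq_bigr => k _; rewrite RinvE RpowE INRE.
- apply: infinite_sum_partial; apply: Un_cv_ext (CV_mult _ _ _ _ (Un_cv_const _)
    (euler_partial_cvg (eta_partial_cvg cvz) (fun p N => eta_term_tail R p N (ltnW r_ge2)))).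
  by move=> N; rewrite bell_series_partial.
- rewrite eta_factor_powerRZ !RmultE RinvE INRE factE.
  by field; rewrite natr_fact_neq0 eta_factor_neq0.
Qed.
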